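(* Fix a function $b:\mathbb{R}^d\to\mathbb{R}^+$, and for $u\in\mathbb{R}^d$ define $a_u:\mathbb{R}^d\to\mathbb{R}$ by $a_u(x)=b(u)\cdot(u\cdot x)$. The pseudo-dimension of $\{a_u: u\in B(1)\}$ is $O(d)$.
   Context: $B(1)=\{u\in\mathbb{R}^d:\|u\|_2\le1\}$. For a set $A$ of real-valued functions on a common domain $X$, its pseudo-dimension is the VC-dimension of the set of indicator functions $\{(x,y)\mapsto \mathbf{1}[a(x)\ge y]: a\in A\}$ on $X\times\mathbb{R}$. *)

From mathcomp Require Import all_boot all_order all_algebra.
From mathcomp Require Import reals.
Set Implicit Arguments. Unset Strict Implicit. Unset Printing Implicit Defensive.
Import Order.TTheory GRing.Theory Num.Theory.
Local Open Scope ring_scope.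

Definition dotv (R : realType) (d : nat) (u x : 'rV[R]_d) : R :=
  \sum_(i < d) u 0 i * x 0 i.

Definition unit_ball (R : realType) (d : nat) (u : 'rV[R]_d) : Prop :=
  dotv u u <= 1.

Definition shatters (T : eqType) (H : (T -> bool) -> Prop) (S : seq T) : Prop :=
  forall f : T -> bool, exists h, H h /\ forall x, x \in S -> h x = f x.

Definition VC_dim_le (T : eqType) (H : (T -> bool) -> Prop) (n : nat) : Prop :=
  forall S : seq T, uniq S -> shatters H S -> (size S <= n)%N.

Definition subgraph_class (R : realType) (X : eqType) (A : (X -> R) -> Prop)
  : (X * R -> bool) -> Prop :=
  fun g => exists a, A a /\ g = (fun p => p.2 <= a p.1).

Definition pdim_le (R : realType) (X : eqType) (A : (X -> R) -> Prop) (n : nat)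
  : Prop := VC_dim_le (subgraph_class A) n.

Definition a_fun (R : realType) (d : nat) (b : 'rV[R]_d -> R) (u : 'rV[R]_d)
  : 'rV[R]_d -> R := fun x => b u * dotv u x.

Definition a_class (R : realType) (d : nat) (b : 'rV[R]_d -> R)
  : ('rV[R]_d -> R) -> Prop :=
  fun a => exists u, unit_ball u /\ a = a_fun b u.

From mathcomp Require Import all_boot all_order all_algebra.
From mathcomp Require Import reals.
Set Implicit Arguments. Unset Strict Implicit. Unset Printing Implicit Defensive.
Import Order.TTheory GRing.Theory Num.Theory.
Local Open Scope ring_scope.

(* Since a_u(x) = (b(u) u) . x, every a_u is a linear functional, and
   [y <= w . x] says that (x, y) lies in the halfspace of R^(d+1) through the
   origin with normal (w, -1).  Halfspaces through the origin of R^m shatter no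
   m + 1 points: a nonzero linear dependence c of those points cannot have all
   the products c_k (p_k . w) of the same strict sign, so the labelling
   "p_k is below iff c_k > 0" is not realised.  Hence the pseudo-dimension is
   at most d + 1 <= 2 d, whatever b is. *)

Lemma shatters_nth (T : eqType) (H : (T -> bool) -> Prop) (S : seq T) (x0 : T) :
  uniq S -> shatters H S ->
  forall g : 'I_(size S) -> bool,
    exists h, H h /\ forall k : 'I_(size S), h (nth x0 S k) = g k.
Proof.
move=> uS shS g.
have [h [Hh hS]] :=
  shS (fun x => [exists k : 'I_(size S), (nth x0 S k == x) && g k]).
exists h; split=> // k; rewrite hS ?mem_nth //.
apply/existsP/idP => [[k' /andP[/eqP Sk' gk']] | gk]; last first.
  by exists k; rewrite eqxx.
suff -> : k = k' by [].
apply: val_inj; apply/eqP; rewrite -(nth_uniq x0 _ _ uS) ?ltn_ord //.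
by apply/eqP; symmetry.
Qed.

Lemma VC_dim_le_comp (T T' : eqType) (phi : T -> T')
    (H : (T -> bool) -> Prop) (H' : (T' -> bool) -> Prop) (n : nat) :
  injective phi ->
  (forall h, H h -> exists2 h', H' h' & h =1 h' \o phi) ->
  VC_dim_le H' n -> VC_dim_le H n.
Proof.
move=> phi_inj HH' VCH' S uS shS; rewrite -(size_map phi).
apply: VCH'; first by rewrite map_inj_uniq.
move=> f'; have [h [Hh hS]] := shS (f' \o phi).
have [h' H'h' hh'] := HH' h Hh.
exists h'; split=> // _ /mapP[x xS ->].
by rewrite -[h' _]/((h' \o phi) x) -hh' hS.
Qed.

Lemma left_kernel_pos (R : realFieldType) (m n : nat) (M : 'M[R]_(m, n)) :
  (n < m)%N -> exists2 c : 'rV_m, c *m M = 0 & exists i, 0 < c 0 i.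
Proof.
move=> lt_nm.
have : kermx M != 0.
  by rewrite kermx_eq0 /row_free ltn_eqF // (leq_ltn_trans (rank_leq_col M)).
case/rowV0Pn=> c /sub_kermxP cM c_neq0.
have [i ci] : exists i, c 0 i != 0.
  apply/existsP; apply: contraR c_neq0 => /existsPn c0.
  by apply/eqP/rowP => i; rewrite mxE; apply/eqP/negPn.
have [ci_lt0 | ci_gt0 | /eqP] := ltrgtP (c 0 i) 0; last by rewrite (negPf ci).
- by exists (- c); [rewrite mulNmx cM oppr0 | exists i; rewrite mxE oppr_gt0].
- by exists c; last exists i.
Qed.

Definition halfspace0_class (R : realFieldType) (m : nat)
  : ('rV[R]_m -> bool) -> Prop :=
  fun h => exists w : 'cV_m, h = fun v => 0 <= (v *m w) 0 0.

Lemma VC_dim_halfspace0 (R : realFieldType) (m : nat) :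
  VC_dim_le (@halfspace0_class R m) m.
Proof.
move=> S uS shS; rewrite leqNgt; apply/negP => lt_mS.
pose M : 'M[R]_(size S, m) := \matrix_(k < size S) nth 0 S k.
have [c cM [i ci]] := left_kernel_pos M lt_mS.
have [_ [[w ->] wS]] := shatters_nth 0 uS shS (fun k => ~~ (0 < c 0 k)).
pose g k := (nth 0 S k *m w) 0 0.
have sum0 : \sum_k c 0 k * g k = 0.
  transitivity ((c *m M *m w) 0 0); last by rewrite cM mul0mx mxE.
  rewrite -mulmxA mxE; apply: eq_bigr => k _; congr (_ * _).
  have -> : (M *m w) k 0 = row k (M *m w) 0 0 by rewrite [RHS]mxE.
  by rewrite row_mul rowK.
have term_lt0 k : 0 < c 0 k -> c 0 k * g k < 0.
  by move=> ck; rewrite pmulr_rlt0 // ltNge wS ck.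
have term_le0 k : c 0 k * g k <= 0.
  have [/term_lt0/ltW // | ck] := ltrP 0 (c 0 k).
  by apply: mulr_le0_ge0 => //; rewrite wS -leNgt.
have : \sum_k c 0 k * g k < 0.
  rewrite (bigD1 i) //= -[X in _ < X]addr0.
  by apply: ltr_leD; [exact: term_lt0 | exact: sumr_le0].
by rewrite sum0 ltxx.
Qed.

Lemma dotv_mulmx (R : realType) (d : nat) (u x : 'rV[R]_d) :
  dotv u x = (x *m u^T) 0 0.
Proof. by rewrite /dotv mxE; apply: eq_bigr => i _; rewrite mxE mulrC. Qed.

Lemma pdim_le_linear (R : realType) (d : nat) (A : ('rV[R]_d -> R) -> Prop) :
  (forall a, A a -> exists w : 'cV_d, a =1 fun x => (x *m w) 0 0) ->
  pdim_le A (d + 1).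
Proof.
move=> A_lin.
pose phi (p : 'rV[R]_d * R) : 'rV_(d + 1) := row_mx p.1 (const_mx p.2).
apply: (@VC_dim_le_comp _ _ phi _ (@halfspace0_class R (d + 1)));
  last exact: VC_dim_halfspace0.
  move=> [x y] [x' y'] /eq_row_mx /= [-> /matrixP/(_ 0 0)].
  by rewrite !mxE => ->.
move=> _ [a [/A_lin [w aw] ->]].
pose w' : 'cV_(d + 1) := col_mx w (const_mx (-1)).
exists (fun v => 0 <= (v *m w') 0 0); first by exists w'.
move=> [x y]; rewrite /= aw mul_row_col [in X in _ = X]mxE.
rewrite [X in _ + X]mxE big_ord1.
by rewrite !mxE mulrN1 subr_ge0.
Qed.

Lemma pdim_a_class (R : realType) (d : nat) (b : 'rV[R]_d -> R) :
  pdim_le (a_class b) (d + 1).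
Proof.
apply: pdim_le_linear => _ [u [_ ->]]; exists (b u *: u)^T => x.
by rewrite /a_fun dotv_mulmx linearZ /= -scalemxAr [X in _ = X]mxE.
Qed.

Theorem lemma10 (R : realType) :
  exists C : nat, forall (d : nat), (0 < d)%N ->
    forall b : 'rV[R]_d -> R, (forall u, 0 < b u) ->
      pdim_le (a_class b) (C * d)%N.
Proof.
exists 2%N => d d_gt0 b _ S uS shS.
apply: leq_trans (pdim_a_class uS shS) _.
by rewrite mul2n -addnn leq_add2l.
Qed.
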